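(* Let $\psi,\phi\in\mathbf{\Psi}_n$, and $\bar\phi(t):=\phi(t_1,\ldots,t_{n-1},0)$ for $t:=(t_1,\ldots,t_{n-1})\in\Omega_{n-1}$. Then there exists a $\kappa>0$ such that $$\max\{|\!|\!|(x_1,\ldots,x_{n-1})|\!|\!|_{\bar\phi},\ |\!|\!|(x_n,\ldots,x_{n})|\!|\!|_{\bar\phi},\ \|x_n\|\}\le \kappa\cdot|\!|\!|x|\!|\!|_\psi$$ for all $x:=(x_1,\ldots,x_n)\in X^n$.
   Context: Let $(X,\|\cdot\|)$ be a normed vector space, $n\ge2$. $\Omega_k:=\{t\in\mathbb{R}^k\mid t_i\ge0,\ \sum_i t_i=1\}$, $\Omega_k^\circ:=\{t\in\Omega_k\mid t_i<1\ \forall i\}$. $\mathbf{\Psi}_k$ is the class of convex continuous $\psi:\Omega_k\to\mathbb{R}$ with (B1) $\psi(\mathbf{e}_i)=1$ for all standard unit vectors $\mathbf{e}_i$ and (B2) $\psi(t)\ge(1-t_i)\psi\big(\frac{t_1}{1-t_i},\ldots,\frac{t_{i-1}}{1-t_i},0,\frac{t_{i+1}}{1-t_i},\ldots,\frac{t_k}{1-t_i}\big)$ for all $t\in\Omega_k^\circ$, $i=1,\ldots,k$. For $\psi\in\mathbf{\Psi}_k$, $|\!|\!|x|\!|\!|_\psi:=\big(\sum_{i}\|x_i\|\big)\,\psi\big(\frac{\|x_1\|}{\sum_{i}\|x_i\|},\ldots,\frac{\|x_k\|}{\sum_{i}\|x_i\|}\big)$ for $0\ne x\in X^k$, $|\!|\!|0|\!|\!|_\psi:=0$.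 One has $\bar\phi\in\mathbf{\Psi}_{n-1}$; in $|\!|\!|(x_n,\ldots,x_n)|\!|\!|_{\bar\phi}$ the vector $x_n$ is repeated $n-1$ times. *)

From HB Require Import structures.
From mathcomp Require Import all_boot all_order all_algebra.
From mathcomp Require Import all_classical all_reals all_analysis.
Set Implicit Arguments. Unset Strict Implicit. Unset Printing Implicit Defensive.
Import Order.TTheory GRing.Theory Num.Theory.
Import numFieldNormedType.Exports.
Local Open Scope classical_set_scope.
Local Open Scope ring_scope.

Definition Omega (R : realType) (k : nat) : set 'rV[R]_k :=
  [set t | (forall i, 0 <= t 0 i) /\ \sum_(i < k) t 0 i = 1].

Definition Omega_int (R : realType) (k : nat) : set 'rV[R]_k :=
  [set t | @Omega R k t /\ (forall i, t 0 i < 1)].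

Definition unitv (R : realType) (k : nat) (i : 'I_k) : 'rV[R]_k :=
  \row_(j < k) (i == j)%:R.

Definition dropi (R : realType) (k : nat) (t : 'rV[R]_k) (i : 'I_k) : 'rV[R]_k :=
  \row_(j < k) (if j == i then 0 else t 0 j / (1 - t 0 i)).

Definition PsiClass (R : realType) (k : nat) (psi : 'rV[R]_k -> R) : Prop :=
  [/\ (forall s t (l : R), @Omega R k s -> @Omega R k t -> 0 <= l <= 1 ->
         psi (l *: s + (1 - l) *: t) <= l * psi s + (1 - l) * psi t),
      {within @Omega R k, continuous psi},
      (forall i, psi (unitv R i) = 1) &
      (forall t i, @Omega_int R k t ->
         (1 - t 0 i) * psi (dropi t i) <= psi t)].

Definition psinorm (R : realType) (X : normedModType R) (k : nat)
  (psi : 'rV[R]_k -> R) (x : 'I_k -> X) : R :=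
  let S := \sum_(i < k) `|x i| in
  if `[< x = (fun _ => 0) >] then 0 else S * psi (\row_(i < k) (`|x i| / S)).

(* phi-bar : restriction of phi to the face t_n = 0 *)
Definition phibar (R : realType) (n : nat) (phi : 'rV[R]_n -> R)
  (t : 'rV[R]_n.-1) : R :=
  phi (\row_(j < n) (if @insub _ (fun m => (m < n.-1)%N) 'I_n.-1 (val j) is Some j' then t 0 j' else 0)).

Definition ord_last (n : nat) (hn : (0 < n)%N) : 'I_n :=
  Ordinal (n := n) (m := n.-1) (eq_ind_r is_true hn (ltn_predL n)).

From HB Require Import structures.
From mathcomp Require Import all_boot all_order all_algebra.
From mathcomp Require Import all_classical all_reals all_analysis.
From mathcomp Require Import ring lra.
Import Order.TTheory GRing.Theory Num.Theory.
Import numFieldNormedType.Exports.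
Local Open Scope ring_scope.

(* Every psi in Psi_k satisfies max_i t_i <= psi t <= 1 on the simplex: the upper
   bound by convexity and (B1), the lower bound by (B2); both by induction on the
   size of the support of t, since t is the convex combination of e_i and
   dropi t i, whose support is smaller.  Hence 1/k <= psi <= 1, so |||.|||_psi is
   equivalent to the l^1 sum of the norms with constants 1 and k, and every term
   on the left is at most (n-1) times that sum. *)

Set Implicit Arguments.
Unset Strict Implicit.

Section Simplex.
Variables (R : realType) (k : nat).
Implicit Types (t : 'rV[R]_k) (i j : 'I_k).

Definition row_support t : {set 'I_k} := [set i | t 0 i != 0].

Lemma Omega_unitv j : Omega (unitv R j).
Proof.
split=> [i|]; first by rewrite mxE; case: (j == i).
rewrite (bigD1 j) //= mxE eqxx big1 ?addr0 // => i ij.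
by rewrite mxE eq_sym (negbTE ij).
Qed.

Lemma Omega_pos t : Omega t -> exists i, 0 < t 0 i.
Proof.
case=> t0 ts; case: (pickP (fun i => 0 < t 0 i)) => [i ?|H]; first by exists i.
have : \sum_i t 0 i <= 0 by apply: sumr_le0 => i _; rewrite leNgt H.
lra.
Qed.

Lemma Omega_int_pos_neq t j : Omega_int t -> exists2 i, i != j & 0 < t 0 i.
Proof.
case=> [[t0 ts] t1].
case: (pickP (fun i => (i != j) && (0 < t 0 i))) => [i /andP[]|H].
  by exists i.
have : \sum_(i | i != j) t 0 i <= 0.
  by apply: sumr_le0 => i ij; move: (H i); rewrite ij /= leNgt => ->.
move: ts; rewrite (bigD1 j) //=; have := t1 j; lra.
Qed.

Lemma Omega_eq_unitv t j : Omega t -> 1 <= t 0 j -> t = unitv R j.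
Proof.
case=> t0; rewrite (bigD1 j) //= => ts hj.
have rest_ge0 : 0 <= \sum_(i | i != j) t 0 i by exact: sumr_ge0.
have rest0 : \sum_(i | i != j) t 0 i = 0 by lra.
apply/rowP => i; rewrite !mxE; case: (eqVneq j i) => [<-|ji] /=; first lra.
by apply: (psumr_eq0P (fun i _ => t0 i) rest0); rewrite eq_sym.
Qed.

Lemma Omega_dropi t i : Omega_int t -> Omega (dropi t i).
Proof.
case=> [[t0 ts] t1]; have ti1 := t1 i.
split=> [j|]; rewrite /dropi.
  by rewrite mxE; case: ifP => // _; rewrite divr_ge0 // subr_ge0 ltW.
rewrite (bigD1 i) //= mxE eqxx add0r.
under eq_bigr => j ji do rewrite mxE (negbTE ji).
rewrite -mulr_suml; move: ts; rewrite (bigD1 i) //= => ts.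
have -> : \sum_(j | j != i) t 0 j = 1 - t 0 i by lra.
by rewrite divff // subr_eq0 gt_eqF.
Qed.

Lemma dropi_decomp t i : Omega_int t ->
  t = t 0 i *: unitv R i + (1 - t 0 i) *: dropi t i.
Proof.
case=> _ t1; have ti1 := t1 i.
apply/rowP => j; rewrite !mxE; case: (eqVneq j i) => [->|ji] /=.
  by rewrite mulr1 mulr0 addr0.
rewrite mulr0 add0r; field; lra.
Qed.

Lemma card_row_support_dropi t i : 0 < t 0 i ->
  (#|row_support (dropi t i)| < #|row_support t|)%N.
Proof.
move=> ti; apply/proper_card/properP; split.
  apply/fintype.subsetP => j; rewrite !inE mxE.
  by case: ifP => _; [rewrite eqxx | apply: contra => /eqP ->; rewrite mul0r].
by exists i; rewrite !inE ?mxE ?eqxx // gt_eqF.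
Qed.

Lemma Omega_ind (P : 'rV[R]_k -> Prop) :
  (forall i, P (unitv R i)) ->
  (forall t, Omega_int t -> (forall i, 0 < t 0 i -> P (dropi t i)) -> P t) ->
  forall t, Omega t -> P t.
Proof.
move=> Punit Pdrop; suff PN N t : Omega t -> (#|row_support t| < N)%N -> P t.
  by move=> t Ot; apply: (PN #|row_support t|.+1).
elim: N t => [//|N IH] t Ot ltN.
have [lt1|] := pselect (forall i, t 0 i < 1).
  apply: Pdrop => [//|i ti]; apply: IH; first exact: Omega_dropi.
  exact: leq_trans (card_row_support_dropi ti) ltN.
by case/existsNP=> j /negP; rewrite -leNgt => /(Omega_eq_unitv Ot) ->.
Qed.

End Simplex.

Section PsiBounds.
Variables (R : realType) (k : nat) (psi : 'rV[R]_k -> R).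
Hypothesis psiP : PsiClass psi.

Lemma Psi_le1 t : Omega t -> psi t <= 1.
Proof.
case: psiP => conv _ B1 _; move: t; apply: (Omega_ind (P := fun t => psi t <= 1)).
  by move=> i; rewrite B1.
move=> t Ot IH.
have [i ti] := Omega_pos Ot.1; have ti1 := Ot.2 i.
rewrite (dropi_decomp i Ot).
apply: le_trans (conv _ _ _ (Omega_unitv R i) (Omega_dropi i Ot) _) _.
  by rewrite !ltW.
by rewrite B1; have := IH i ti; nra.
Qed.

Lemma Psi_ge_coord t : Omega t -> forall j, t 0 j <= psi t.
Proof.
case: psiP => _ _ B1 B2; move: t.
apply: (Omega_ind (P := fun t => forall j, t 0 j <= psi t)) => [i|t Ot IH] j.
  by rewrite B1 mxE; case: (i == j).
have [i ij ti] := Omega_int_pos_neq j Ot; have ti1 := Ot.2 i.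
apply: le_trans (B2 t i Ot).
have := IH i ti j; rewrite mxE eq_sym (negbTE ij) => dropj.
have {1}-> : t 0 j = (1 - t 0 i) * (t 0 j / (1 - t 0 i)) by field; lra.
by rewrite ler_wpM2l // subr_ge0 ltW.
Qed.

Lemma Psi_ge_inv t : Omega t -> 1 <= k%:R * psi t.
Proof.
move=> Ot; case: (Ot) => _ t_sum1; rewrite -{1}t_sum1.
apply: le_trans (ler_sum _ (fun j _ => Psi_ge_coord Ot j)) _.
by rewrite sumr_const card_ord mulr_natl.
Qed.

End PsiBounds.

Lemma phibar_le1 (R : realType) m (phi : 'rV[R]_m.+1 -> R) (t : 'rV[R]_m) :
  PsiClass phi -> Omega t -> phibar phi t <= 1.
Proof.
move=> phiP [t0 ts]; apply: (Psi_le1 phiP); split=> [j|].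
  by rewrite mxE; case: insubP.
rewrite big_ord_recr /= mxE; case: insubP => [u|_] /=; first by rewrite ltnn.
rewrite addr0 -ts; apply: eq_bigr => j _; rewrite mxE.
case: insubP => [u _ uj|] /=; last by rewrite ltn_ord.
by congr (t 0 _); apply: val_inj.
Qed.

Section PsiNorm.
Variables (R : realType) (X : normedModType R) (k : nat).
Implicit Types (x : 'I_k -> X) (psi : 'rV[R]_k -> R).

Lemma sum_norm_gt0 x : x <> (fun _ => 0) -> 0 < \sum_i `|x i|.
Proof.
move=> x_neq0; have [i xi] : exists i, x i != 0.
  apply: contra_notP x_neq0 => xeq0; apply: funext => i.
  by apply/eqP; apply: contra_notT xeq0; exists i.
apply: (@lt_le_trans _ _ `|x i|); first by rewrite normr_gt0.
by rewrite (bigD1 i) //= lerDl sumr_ge0.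
Qed.

Lemma Omega_normalized x : x <> (fun _ => 0) ->
  Omega (\row_i (`|x i| / \sum_i `|x i|)).
Proof.
move=> x_neq0; have S_gt0 := sum_norm_gt0 x_neq0.
split=> [j|]; first by rewrite mxE divr_ge0 // ltW.
under eq_bigr do rewrite mxE.
by rewrite -mulr_suml divff // gt_eqF.
Qed.

Lemma psinorm_le_sum psi x : (forall t, Omega t -> psi t <= 1) ->
  psinorm psi x <= \sum_i `|x i|.
Proof.
move=> psi_le1; rewrite /psinorm /=.
have [->|x_neq0] := pselect (x = fun _ => 0); first by rewrite asboolT // sumr_ge0.
rewrite asboolF // -[leRHS]mulr1 ler_wpM2l ?psi_le1 //.
  exact/ltW/sum_norm_gt0.
exact: Omega_normalized.
Qed.

Lemma sum_norm_le_psinorm psi (c : R) x : (forall t, Omega t -> 1 <= c * psi t) ->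
  \sum_i `|x i| <= c * psinorm psi x.
Proof.
move=> psi_ge; rewrite /psinorm /=.
have [->|x_neq0] := pselect (x = fun _ => 0).
  by rewrite asboolT // mulr0 big1 // => i _; rewrite normr0.
rewrite asboolF // mulrCA -{1}[\sum_i _]mulr1 ler_wpM2l ?psi_ge //.
  exact/ltW/sum_norm_gt0.
exact: Omega_normalized.
Qed.

End PsiNorm.

Lemma sum_widen_le (R : numDomainType) m p (le_mp : (m <= p)%N) (f : 'I_p -> R) :
  (forall i, 0 <= f i) -> \sum_(j < m) f (widen_ord le_mp j) <= \sum_i f i.
Proof.
move=> f_ge0; rewrite -big_ord_narrow [leRHS](bigID (fun i : 'I_p => (i < m)%N)) /=.
by rewrite lerDl sumr_ge0.
Qed.

Theorem proposition5p5 (R : realType) (X : normedModType R) (n : nat)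
  (hn : (2 <= n)%N) (psi phi : 'rV[R]_n -> R) :
  PsiClass psi -> PsiClass phi ->
  exists kappa : R, 0 < kappa /\
    forall x : 'I_n -> X,
      Num.max (Num.max
        (psinorm (phibar phi) (fun j : 'I_n.-1 => x (widen_ord (leq_pred n) j)))
        (psinorm (phibar phi) (fun _ : 'I_n.-1 => x (ord_last (ltnW hn)))))
        `|x (ord_last (ltnW hn))|
      <= kappa * psinorm psi x.
Proof.
case: n hn psi phi => [//|m] hn psi phi psiP phiP.
have m_ge1 : 1 <= m%:R :> R by rewrite ler1n.
exists (m%:R * m.+1%:R); split; first by rewrite mulr_gt0 // (lt_le_trans ltr01).
move=> x; set L := ord_last _; set S := \sum_i `|x i|.
have S_le : S <= m.+1%:R * psinorm psi x.
  by apply: sum_norm_le_psinorm => t; apply: Psi_ge_inv.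
have first_le : psinorm (phibar phi) (fun j => x (widen_ord (leq_pred m.+1) j)) <= S.
  apply: le_trans (psinorm_le_sum _ (fun t => phibar_le1 phiP)) _.
  exact: sum_widen_le (fun i => normr_ge0 (x i)).
have last_le : `|x L| <= S by rewrite /S (bigD1 L) //= lerDl sumr_ge0.
have mS_le := ler_wpM2l (ler0n R m) S_le.
have S_le_mS : S <= m%:R * S by rewrite ler_peMl ?sumr_ge0.
have mL_le := ler_wpM2l (ler0n R m) last_le.
have last_rep_le : psinorm (phibar phi) (fun _ : 'I_m => x L) <= m%:R * `|x L|.
  apply: le_trans (psinorm_le_sum _ (fun t => phibar_le1 phiP)) _.
  by rewrite sumr_const card_ord mulr_natl.
rewrite !ge_max -!andbA; apply/and3P; split; lra.
Qed.
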